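(* Let $\mu$ be a positive Borel measure on $\mathbb{R}^d$ such that $\mu(B)>0$ for every ball $B\subset\mathbb{R}^d$. Let $\Omega\subset\mathbb{R}^d$ be a bounded domain, $r:\Omega\to(0,+\infty)$ an admissible radius function in $\Omega$, and $0\leq\alpha<1$. Suppose $u,v\in C(\overline{\Omega})$ satisfy $T_\alpha u=u$ and $T_\alpha v=v$ in $\Omega$, and $u\leq v$ on $\partial\Omega$. Then $u\leq v$ in $\Omega$.
   Context: An admissible radius function in $\Omega$ is $r:\Omega\to(0,\infty)$ with $0<r(x)\leq\operatorname{dist}(x,\partial\Omega)$; $B_x=B(x,r(x))$ (open ball). For $x\in\Omega$: $Su(x)=\frac12(\sup_{B_x}u+\inf_{B_x}u)$, $Mu(x)=\frac{1}{\mu(B_x)}\int_{B_x}u\,d\mu$ (the measure $\mu$ is implicitly assumed finite on balls so that these averages are defined), and $T_\alpha=\alpha S+(1-\alpha)M$. *)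

From HB Require Import structures.
From mathcomp Require Import all_boot all_order all_algebra.
From mathcomp Require Import all_classical all_reals all_analysis.
Set Implicit Arguments. Unset Strict Implicit. Unset Printing Implicit Defensive.
Import Order.TTheory GRing.Theory Num.Theory.
Import numFieldNormedType.Exports.
Local Open Scope classical_set_scope.
Local Open Scope ring_scope.

(* R^d is modelled as 'rV[R]_d (its product topology is the Euclidean one). *)

Definition borelRd (R : realType) (d : nat) :=
  g_sigma_algebraType (@open 'rV[R]_d).

Definition edist (R : realType) (d : nat) (x y : 'rV[R]_d) : R :=
  Num.sqrt (\sum_(i < d) (x ord0 i - y ord0 i) ^+ 2).

Definition eball (R : realType) (d : nat) (x : 'rV[R]_d) (rho : R) : set 'rV[R]_d :=
  [set y | edist x y < rho].

Definition bdry (R : realType) (d : nat) (A : set 'rV[R]_d) : set 'rV[R]_d :=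
  closure A `\` interior A.

Definition dist_set (R : realType) (d : nat) (x : 'rV[R]_d) (A : set 'rV[R]_d) : R :=
  inf [set edist x y | y in A].

Definition bounded_domain (R : realType) (d : nat) (O : set 'rV[R]_d) : Prop :=
  O !=set0 /\ open O /\ connected O /\
  exists M : R, forall x, O x -> edist 0 x <= M.

Definition admissible (R : realType) (d : nat) (O : set 'rV[R]_d) (r : 'rV[R]_d -> R) : Prop :=
  forall x, O x -> 0 < r x /\ r x <= dist_set x (bdry O).

Definition Sop (R : realType) (d : nat) (r : 'rV[R]_d -> R) (u : 'rV[R]_d -> R)
  (x : 'rV[R]_d) : R :=
  (sup [set u y | y in eball x (r x)] + inf [set u y | y in eball x (r x)]) / 2.

Definition Mop (R : realType) (d : nat)
  (mu : {measure set (borelRd R d) -> \bar R}) (r : 'rV[R]_d -> R)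
  (u : 'rV[R]_d -> R) (x : 'rV[R]_d) : R :=
  Rintegral mu (eball x (r x) : set (borelRd R d)) u /
  fine (mu (eball x (r x) : set (borelRd R d))) .

Definition Talpha (R : realType) (d : nat)
  (mu : {measure set (borelRd R d) -> \bar R}) (r : 'rV[R]_d -> R) (alpha : R)
  (u : 'rV[R]_d -> R) (x : 'rV[R]_d) : R :=
  alpha * Sop r u x + (1 - alpha) * Mop mu r u x.

(* Let w = u - v and let M be its maximum over the compact set closure Omega.
   If M > 0 it is attained inside Omega.  At an interior point x with
   w x = M, the fixed-point equations give
     M = alpha (S u - S v)(x) + (1 - alpha) (M u - M v)(x);
   the first difference is at most M, and the second is the mu-mean of w over
   B_x, which is < M as soon as w < M somewhere on B_x (by continuity and
   since mu charges every ball).  As alpha < 1, w = M on all of B_x, so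
   {w = M} is open in Omega; it is also relatively closed, so connectedness
   gives w = M on closure Omega.  Admissibility forces bdry Omega to be
   nonempty, and there w <= 0 < M: a contradiction. *)

From Pilot Require Import Defs.
From HB Require Import structures.
From mathcomp Require Import all_boot all_order all_algebra.
From mathcomp Require Import all_classical all_reals all_analysis.
From mathcomp Require Import ring lra.
Set Implicit Arguments. Unset Strict Implicit. Unset Printing Implicit Defensive.
Import Order.TTheory GRing.Theory Num.Theory.
Import numFieldNormedType.Exports.
Local Open Scope classical_set_scope.
Local Open Scope ring_scope.

Section euclidean_distance.
Variables (R : realType) (d : nat).
Implicit Types (x y z : 'rV[R]_d) (e : R).
Local Notation edist := Defs.edist.

Lemma edist_ge0 x y : 0 <= edist x y.
Proof. exact: sqrtr_ge0. Qed.

Lemma edistxx x : edist x x = 0.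
Proof. by rewrite /edist big1 ?sqrtr0 // => i _; rewrite subrr expr0n. Qed.

Lemma edist_coord x y i : `|x ord0 i - y ord0 i| <= edist x y.
Proof.
rewrite /edist -sqrtr_sqr ler_wsqrtr // (bigD1 i) //= lerDl.
by apply: sumr_ge0 => j _; exact: sqr_ge0.
Qed.

Lemma edist_segment x y t : 0 <= t -> edist x (x + t *: (y - x)) = t * edist x y.
Proof.
move=> t0; rewrite /edist.
have -> : \sum_(i < d) (x ord0 i - (x + t *: (y - x)) ord0 i) ^+ 2 =
    t ^+ 2 * \sum_(i < d) (x ord0 i - y ord0 i) ^+ 2.
  by rewrite mulr_sumr; apply: eq_bigr => i _; rewrite !mxE; ring.
by rewrite sqrtrM ?sqr_ge0 // sqrtr_sqr ger0_norm.
Qed.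

Lemma continuous_edist x : continuous (edist x).
Proof.
move=> z; apply: (@continuous_comp _ _ _
  (fun z => \sum_(i < d) (x ord0 i - z ord0 i) ^+ 2) (@Num.sqrt R)).
  apply: continuous_big => [|i _ y]; first exact: add_continuous.
  have diff_y : {for y, continuous (fun z : 'rV[R]_d => x ord0 i - z ord0 i)}.
    apply: continuousB; first exact: cst_continuous.
    exact: (@coord_continuous R 1 d ord0 i).
  under eq_fun do rewrite expr2.
  exact: (continuousM diff_y diff_y).
exact: sqrt_continuous.
Qed.

Lemma open_eball x e : open (eball x e).
Proof.
by apply: open_comp (@open_lt _ e) => z _; exact: continuous_edist.
Qed.

Lemma eball_center x e : 0 < e -> eball x e x.
Proof. by rewrite /eball /= edistxx. Qed.

Lemma nbhs_eball x e : 0 < e -> nbhs x (eball x e).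
Proof.
by move=> e0; apply: open_nbhs_nbhs; split;
  [exact: open_eball | exact: eball_center].
Qed.

Lemma nbhs_ex_eball x (N : set 'rV[R]_d) :
  nbhs x N -> exists2 e, 0 < e & eball x e `<=` N.
Proof.
move/nbhs_ballP => [e e0 sub]; exists e => // z xz; apply: sub.
rewrite -ball_normE /ball_ /= [X in X < _]/Num.Def.normr /= mx_normrE.
apply/bigmax_ltP; split => //= -[i j] _ /=; rewrite (ord1 i) !mxE.
exact: le_lt_trans (edist_coord _ _ _) xz.
Qed.

End euclidean_distance.

Lemma bdry_closure_notin (R : realType) (d : nat) (O : set 'rV[R]_d) z :
  closure O z -> ~ O z -> bdry O z.
Proof. by move=> Oz nOz; split => // /interior_subset. Qed.

Lemma connected_segment (R : realType) (d : nat) (x y : 'rV[R]_d) :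
  connected [set x + t *: (y - x) | t in `[0, 1]%classic].
Proof.
apply: connected_continuous_connected; first exact: segment_connected.
apply: continuous_subspaceT => t; apply: cvgD; first exact: cvg_cst.
exact: scalel_continuous.
Qed.

Section admissible_radius.
Variables (R : realType) (d : nat) (O : set 'rV[R]_d) (r : 'rV[R]_d -> R).
Hypothesis hr : admissible O r.
Local Notation edist := Defs.edist.

Lemma admissible_le_edist_bdry x b : O x -> bdry O b -> r x <= edist x b.
Proof.
move=> Ox Ob; have [_ rx_le] := hr Ox; apply: le_trans rx_le _.
apply: ge_inf; last by exists b.
by exists 0 => _ [y _ <-]; exact: edist_ge0.
Qed.

(* [inf set0 = 0], which admissibility rules out. *)
Lemma admissible_bdry_neq0 x : O x -> bdry O !=set0.
Proof.
move=> Ox; apply/set0P/eqP => O0; have [rx_gt0 rx_le] := hr Ox.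
by move: rx_le; rewrite /dist_set O0 image_set0 inf0 leNgt rx_gt0.
Qed.

(* The segment from [x] to [y] stays closer to [x] than [r x], hence misses
   [bdry O], so [O] and [interior O] cut it into relatively clopen pieces. *)
Lemma admissible_eball_sub x : O x -> eball x (r x) `<=` O.
Proof.
move=> Ox y xy; pose S := [set x + t *: (y - x) | t in `[0, 1]%classic].
have S_eball z : S z -> edist x z < r x.
  move=> [t /=]; rewrite in_itv /= => /andP[t0 t1] <-.
  rewrite edist_segment //; apply: le_lt_trans xy.
  by rewrite ler_piMl // edist_ge0.
have closureO_interior z : S z -> closure O z -> interior O z.
  move=> Sz Oz; apply/not_notP => nOz.
  have := admissible_le_edist_bdry Ox (conj Oz nOz).
  by rewrite leNgt S_eball.
have SO : S `&` O = S.
  apply: connected_segment.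
  - exists x; split => //; exists 0; first by rewrite /= in_itv /= lexx ler01.
    by rewrite scale0r addr0.
  - exists (interior O); first exact: open_interior.
    apply/seteqP; split => z [Sz Oz]; split => //.
      exact: closureO_interior Sz (subset_closure Oz).
    by move: Oz => /interior_subset.
  - exists (closure O); first exact: closed_closure.
    apply/seteqP; split => z [Sz Oz]; split => //; first exact: subset_closure.
    by move: (closureO_interior z Sz Oz) => /interior_subset.
have Sy : S y.
  by exists 1; [rewrite /= in_itv /= lexx ler01 | rewrite scale1r addrC subrK].
by rewrite -SO in Sy; case: Sy.
Qed.

End admissible_radius.

Lemma compact_closure_bounded (R : realType) (d : nat) (O : set 'rV[R]_d) M :
  (forall x, O x -> Defs.edist 0 x <= M) -> compact (closure O).
Proof.
move=> OM; apply: bounded_closed_compact; last exact: closed_closure.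
have normM : closed [set z : 'rV[R]_d | `|z| <= M].
  rewrite -[X in closed X]/(
    (Num.Def.normr : 'rV[R]_d -> R) @^-1` [set t | t <= M]).
  apply: preimage_closed; last exact: closed_le.
  by move=> z _; exact: norm_continuous.
have closureO_normM : closure O `<=` [set z | `|z| <= M].
  rewrite [X in _ `<=` X](closure_id _).1 //; apply: closureS => z Oz /=.
  rewrite [X in X <= _]/Num.Def.normr /= mx_normrE.
  apply/bigmax_leP; split => [|[i j] _ /=].
    exact: le_trans (edist_ge0 _ _) (OM z Oz).
  rewrite (ord1 i); apply: le_trans (OM z Oz).
  by have := edist_coord 0 z j; rewrite mxE sub0r normrN.
exists M; split; first exact: num_real.
by move=> M' MM' z /closureO_normM /= zM; apply: le_trans zM (ltW MM').
Qed.

Lemma continuous_compact_bound (T : topologicalType) (R : realType)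
    (K : set T) (f : T -> R) :
  compact K -> {within K, continuous f} -> exists M, forall x, K x -> `|f x| <= M.
Proof.
move=> cK cf; have [M [_ fKM]] := compact_bounded (continuous_compact cf cK).
by exists (M + 1) => x Kx; apply: fKM; [rewrite ltrDl | exists x].
Qed.

Lemma midrange_sub_le (R : realType) (T : Type) (A : set T) (u v : T -> R) M :
  A !=set0 -> has_ubound (v @` A) -> has_lbound (u @` A) ->
  (forall y, A y -> u y - v y <= M) ->
  (sup (u @` A) + inf (u @` A)) / 2 - (sup (v @` A) + inf (v @` A)) / 2 <= M.
Proof.
move=> [a Aa] vA_ub uA_lb uvM.
have vA_sup : has_sup (v @` A) by split => //; exists (v a), a.
have sup_le : sup (u @` A) <= sup (v @` A) + M.
  apply: ge_sup; first by exists (u a), a.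
  move=> _ [y Ay <-]; have := uvM y Ay.
  have : v y <= sup (v @` A) by apply: sup_upper_bound => //; exists y.
  lra.
have inf_le : inf (u @` A) - M <= inf (v @` A).
  apply: lb_le_inf; first by exists (v a), a.
  move=> _ [y Ay <-]; have := uvM y Ay.
  have : inf (u @` A) <= u y by apply: ge_inf => //; exists y.
  lra.
lra.
Qed.

Section ball_integrals.
Variables (R : realType) (d : nat) (mu : {measure set (borelRd R d) -> \bar R}).
Hypothesis mu_ball_pos : forall (x : 'rV[R]_d) (rho : R), 0 < rho ->
  (0 < mu (eball x rho : set (borelRd R d)))%E.

Lemma integrable_continuous_bounded (B : set 'rV[R]_d) (f : 'rV[R]_d -> R) :
  open B -> (mu (B : set (borelRd R d)) < +oo)%E -> {in B, continuous f} ->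
  (exists M, forall z, B z -> `|f z| <= M) ->
  mu.-integrable (B : set (borelRd R d)) (EFin \o f).
Proof.
move=> oB Bfin cf [M fM]; have mB : measurable (B : set (borelRd R d)).
  exact: sub_sigma_algebra.
apply: measurable_bounded_integrable => //.
  apply: (measurability _ (measurable_realfun.RGenOpens.measurableE R)).
  move=> _ [_ [a [b ->]] <-]; apply: sub_sigma_algebra.
  move=> z /= [Bz abz].
  apply: filterI; first exact: oB.
  by apply: (cf z (mem_set Bz)); exact: interval_open.
exists M; split; first exact: num_real.
by move=> M' MM' z Bz; apply: le_trans (fM z Bz) (ltW MM').
Qed.

Lemma Rintegral_gt0 (B : set 'rV[R]_d) (g : 'rV[R]_d -> R) y :
  open B -> mu.-integrable (B : set (borelRd R d)) (EFin \o g) ->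
  (forall z, B z -> 0 <= g z) -> B y -> {for y, continuous g} -> 0 < g y ->
  0 < Rintegral mu (B : set (borelRd R d)) g.
Proof.
move=> oB intg g_ge0 By cg gy_gt0; pose eps := g y / 2.
have eps_gt0 : 0 < eps by rewrite divr_gt0.
have : nbhs y (B `&` [set z | eps < g z]).
  apply: filterI; first exact: oB.
  have near_gy : nbhs (g y) [set t | eps < t].
    by apply: open_gt; rewrite /= /eps ltr_pdivrMr // ltr_pMr // ltr1n.
  exact: cg _ near_gy.
move=> /nbhs_ex_eball[rho rho_gt0 sub].
have mB : measurable (B : set (borelRd R d)) by exact: sub_sigma_algebra.
have mBy : measurable (eball y rho : set (borelRd R d)).
  by apply: sub_sigma_algebra; exact: open_eball.
have BB : eball y rho `<=` B by move=> z /sub[].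
have mg := measurable_int mu intg.
have g_ge0E z : B z -> (0 <= (EFin \o g) z)%E by move=> Bz; rewrite lee_fin g_ge0.
have eps_mu_le : (eps%:E * mu (eball y rho : set (borelRd R d)) <=
    \int[mu]_(z in (B : set (borelRd R d))) (EFin \o g) z)%E.
  apply: le_trans (ge0_subset_integral mu mBy mB mg g_ge0E BB).
  rewrite -integral_cst //; apply: ge0_le_integral => //.
  - by move=> z _; rewrite lee_fin ltW.
  - exact: measurable_funS mB BB mg.
  - by move=> z /sub[_ /= /ltW]; rewrite lee_fin.
rewrite -lte_fin /Rintegral fineK ?integrable_fin_num //.
by apply: lt_le_trans eps_mu_le; rewrite mule_gt0 ?lte_fin // mu_ball_pos.
Qed.

End ball_integrals.

Section constant_on_closure.
Variables (T : topologicalType) (R : realType).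

Lemma within_closure_const (A : set T) (f : T -> R) M :
  {within closure A, continuous f} -> (forall x, A x -> f x = M) ->
  forall x, closure A x -> f x = M.
Proof.
move=> cf fM x Ax; apply/eqP/negP => /negP fxM.
have := (subspace_continuousP _ f).1 cf x Ax _ (open_neq fxM).
by move=> /Ax[y [Ay /= /(_ (subset_closure Ay))]]; rewrite fM // eqxx.
Qed.

Lemma connected_closure_const (O : set T) (f : T -> R) M p :
  connected O -> {within closure O, continuous f} -> O p -> f p = M ->
  (forall x, O x -> f x = M -> \forall y \near x, O y /\ f y = M) ->
  forall x, closure O x -> f x = M.
Proof.
move=> cO cf Op fpM fM_near; pose A := [set x | O x /\ f x = M].
have AO : A `<=` O by move=> x [].
have OA : O = A.
  apply/esym/cO; first by exists p.
  - exists A; last by apply/seteqP; split => x [].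
    by rewrite openE => x [Ox /(fM_near x Ox)].
  - exists (closure A); first exact: closed_closure.
    apply/seteqP; split => [x Ax | x [Ox Ax]].
      by split; [exact: AO | exact: subset_closure].
    split => //; apply: within_closure_const Ax => [|y []//].
    exact: continuous_subspaceW (closureS AO) cf.
by rewrite OA in cf *; apply: within_closure_const cf _ => x [].
Qed.

End constant_on_closure.

Section comparison.
Variables (R : realType) (d : nat) (mu : {measure set (borelRd R d) -> \bar R}).
Hypothesis mu_ball_pos : forall (x : 'rV[R]_d) (rho : R), 0 < rho ->
  (0 < mu (eball x rho : set (borelRd R d)))%E.
Hypothesis mu_ball_fin : forall (x : 'rV[R]_d) (rho : R), 0 < rho ->
  (mu (eball x rho : set (borelRd R d)) < +oo)%E.
Variables (O : set 'rV[R]_d) (r : 'rV[R]_d -> R).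
Hypotheses (hr : admissible O r) (cK : compact (closure O)).
Local Notation B x := (eball x (r x) : set (borelRd R d)).

Lemma radius_gt0 x : O x -> 0 < r x.
Proof. by move=> /hr[]. Qed.

Lemma mu_eball_gt0 x : O x -> 0 < fine (mu (B x)).
Proof.
by move=> /radius_gt0 rx; apply: fine_gt0; rewrite mu_ball_pos ?mu_ball_fin.
Qed.

Lemma eball_sub_closure x : O x -> B x `<=` closure O.
Proof. by move=> Ox y /(admissible_eball_sub hr Ox)/subset_closure. Qed.

Lemma continuous_in_eball (f : 'rV[R]_d -> R) x :
  {within closure O, continuous f} -> O x -> {in B x, continuous f}.
Proof.
move=> cf Ox; rewrite -continuous_open_subspace; last exact: open_eball.
exact: continuous_subspaceW (eball_sub_closure Ox) cf.
Qed.

Lemma integrable_eball (f : 'rV[R]_d -> R) x :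
  {within closure O, continuous f} -> O x -> mu.-integrable (B x) (EFin \o f).
Proof.
move=> cf Ox; have [c fc] := continuous_compact_bound cK cf.
apply: integrable_continuous_bounded.
- exact: open_eball.
- exact/mu_ball_fin/radius_gt0.
- exact: continuous_in_eball.
- by exists c => z /(eball_sub_closure Ox)/fc.
Qed.

Lemma Mop_lt (f : 'rV[R]_d -> R) x y M :
  {within closure O, continuous f} -> O x ->
  (forall z, B x z -> f z <= M) -> B x y -> f y < M -> Mop mu r f x < M.
Proof.
move=> cf Ox fM Bxy fyM.
have cMf : {within closure O, continuous (fun z => M - f z)}.
  by move=> z; apply: cvgB; [exact: cvg_cst | exact: cf].
have cM : {within closure O, continuous (fun=> M)} by move=> z; exact: cvg_cst.
have : 0 < Rintegral mu (B x) (fun z => M - f z).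
  apply: (@Rintegral_gt0 R d mu mu_ball_pos _ (fun z => M - f z) y).
  - exact: open_eball.
  - exact: integrable_eball.
  - by move=> z /fM; rewrite subr_ge0.
  - exact: Bxy.
  - exact: continuous_in_eball cMf Ox y (mem_set Bxy).
  - by rewrite subr_gt0.
have mB : measurable (B x) by apply: sub_sigma_algebra; exact: open_eball.
rewrite RintegralB ?Rintegral_cst ?integrable_eball // subr_gt0 => intf_lt.
by rewrite /Mop ltr_pdivrMr // mu_eball_gt0.
Qed.

Variables (u v : 'rV[R]_d -> R).
Hypotheses (hu : {within closure O, continuous u})
  (hv : {within closure O, continuous v}).

Lemma Sop_sub_le x M : O x -> (forall y, B x y -> u y - v y <= M) ->
  Sop r u x - Sop r v x <= M.
Proof.
move=> Ox uvM; have [cu ucu] := continuous_compact_bound cK hu.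
have [cv vcv] := continuous_compact_bound cK hv.
apply: midrange_sub_le => //.
- by exists x; exact/eball_center/radius_gt0.
- exists cv => _ [y /(eball_sub_closure Ox)/vcv vy <-].
  exact: le_trans (ler_norm _) vy.
- exists (- cu) => _ [y /(eball_sub_closure Ox)/ucu uy <-].
  by rewrite lerNl (le_trans _ uy) // -normrN ler_norm.
Qed.

Lemma Mop_sub x : O x ->
  Mop mu r u x - Mop mu r v x = Mop mu r (fun z => u z - v z) x.
Proof.
move=> Ox; have mB : measurable (B x).
  by apply: sub_sigma_algebra; exact: open_eball.
by rewrite /Mop RintegralB ?integrable_eball // mulrBl.
Qed.

Variable alpha : R.
Hypothesis halpha : 0 <= alpha < 1.

Lemma Talpha_sub_lt x y M : O x -> (forall z, B x z -> u z - v z <= M) ->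
  B x y -> u y - v y < M -> Talpha mu r alpha u x - Talpha mu r alpha v x < M.
Proof.
move=> Ox uvM Bxy uvyM; have S_le := Sop_sub_le Ox uvM.
have M_lt : Mop mu r (fun z => u z - v z) x < M.
  by apply: Mop_lt Bxy uvyM => // z; apply: cvgB; [exact: hu | exact: hv].
rewrite -Mop_sub // in M_lt; case/andP: halpha => alpha_ge0 alpha_lt1.
rewrite /Talpha; nra.
Qed.

Hypotheses (Tu : forall x, O x -> Talpha mu r alpha u x = u x)
  (Tv : forall x, O x -> Talpha mu r alpha v x = v x).

Lemma fixed_points_sub_max_near x M : (forall z, closure O z -> u z - v z <= M) ->
  O x -> u x - v x = M -> \forall y \near x, O y /\ u y - v y = M.
Proof.
move=> uvM Ox uvxM; apply: filterS (nbhs_eball x (radius_gt0 Ox)) => y Bxy.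
split; first exact: (admissible_eball_sub hr Ox Bxy).
apply/eqP; rewrite eq_le uvM /=; last exact: (eball_sub_closure Ox Bxy).
rewrite leNgt; apply/negP => uvyM.
have := Talpha_sub_lt Ox (fun z Bz => uvM z (eball_sub_closure Ox Bz)) Bxy uvyM.
by rewrite Tu // Tv // uvxM ltxx.
Qed.

End comparison.

Theorem proposition4p1 (R : realType) (d : nat)
  (mu : {measure set (borelRd R d) -> \bar R})
  (mu_ball_pos : forall (x : 'rV[R]_d) (rho : R), 0 < rho ->
     (0 < mu (eball x rho : set (borelRd R d)))%E)
  (mu_ball_fin : forall (x : 'rV[R]_d) (rho : R), 0 < rho ->
     (mu (eball x rho : set (borelRd R d)) < +oo)%E)
  (Omega : set 'rV[R]_d) (hOmega : bounded_domain Omega)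
  (r : 'rV[R]_d -> R) (hr : admissible Omega r)
  (alpha : R) (halpha : 0 <= alpha < 1)
  (u v : 'rV[R]_d -> R)
  (hu : {within closure Omega, continuous u})
  (hv : {within closure Omega, continuous v})
  (Tu : forall x, Omega x -> Talpha mu r alpha u x = u x)
  (Tv : forall x, Omega x -> Talpha mu r alpha v x = v x)
  (hbd : forall x, bdry Omega x -> u x <= v x) :
  forall x, Omega x -> u x <= v x.
Proof.
move=> x0 Ox0; have [[p Op] [_ [cO [M0 OM0]]]] := hOmega.
have cK := compact_closure_bounded OM0.
pose w z := u z - v z.
have cw : {within closure Omega, continuous w}.
  by move=> z; apply: cvgB; [exact: hu | exact: hv].
have [c /set_mem Kc w_le] := EVT_max_rV (ex_intro _ p (subset_closure Op)) cK cw.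
rewrite leNgt; apply/negP => vu_lt.
have wc_gt0 : 0 < w c.
  apply: lt_le_trans (w_le x0 (mem_set (subset_closure Ox0))).
  by rewrite subr_gt0.
have Oc : Omega c.
  apply/not_notP => /(bdry_closure_notin Kc)/hbd.
  by rewrite -subr_le0 -/(w c) leNgt wc_gt0.
have w_near x : Omega x -> w x = w c -> \forall y \near x, Omega y /\ w y = w c.
  exact: (fixed_points_sub_max_near mu_ball_pos mu_ball_fin hr cK hu hv halpha
    Tu Tv (fun z Kz => w_le z (mem_set Kz))).
have w_const := connected_closure_const cO cw Oc erefl w_near.
have [b bb] := admissible_bdry_neq0 hr Oc.
by have := hbd b bb; rewrite -subr_le0 -/(w b) (w_const b bb.1) leNgt wc_gt0.
Qed.
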